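(* Let $G$ be a group in which every non-abelian subgroup $H$ satisfies $C_G(H)\le H$, and let $N$ be a finite normal subgroup of $G$. Then $C_G(N)$ contains every element of $G$ of infinite order.
   Context: $C_G(H)$ denotes the centralizer of $H$ in $G$. *)

From Stdlib Require Import List Arith.

Record Group := {
  carrier :> Type;
  gmul : carrier -> carrier -> carrier;
  ginv : carrier -> carrier;
  gone : carrier;
  gmulA : forall x y z, gmul x (gmul y z) = gmul (gmul x y) z;
  gmul1l : forall x, gmul gone x = x;
  gmulVl : forall x, gmul (ginv x) x = gone
}.

Section GroupDefs.
Variable G : Group.

Fixpoint gpow (x : G) (n : nat) : G :=
  match n with
  | O => gone G
  | S m => gmul G x (gpow x m)
  end.

Definition is_subgroup (H : G -> Prop) : Prop :=
  H (gone G) /\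
  (forall x y, H x -> H y -> H (gmul G x y)) /\
  (forall x, H x -> H (ginv G x)).

Definition abelian (H : G -> Prop) : Prop :=
  forall x y, H x -> H y -> gmul G x y = gmul G y x.

Definition centralizer (H : G -> Prop) : G -> Prop :=
  fun g => forall h, H h -> gmul G g h = gmul G h g.

Definition is_normal (N : G -> Prop) : Prop :=
  is_subgroup N /\
  forall g n, N n -> N (gmul G (gmul G (ginv G g) n) g).

Definition finite_set (N : G -> Prop) : Prop :=
  exists l : list G, forall x, N x -> In x l.

Definition infinite_order (g : G) : Prop :=
  forall n : nat, 0 < n -> gpow g n <> gone G.

End GroupDefs.

(** Since N is finite and normal, conjugation by g permutes N with finite
    orbits, so some power x = g^m (m > 0) centralizes N.  If g did not
    commute with some n in N, then neither would h = g^(m+1) = g x, so the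
    subgroup N<h> is non-abelian; it is centralized by x, hence contains x by
    hypothesis.  Writing x = a h^k with a in N gives g^(m - (m+1)k) in N, and
    since N is finite this power must be trivial, which is impossible as
    m + 1 does not divide m and g has infinite order. *)

From Stdlib Require Import List Arith Lia Classical.

Arguments gmul {_}. Arguments ginv {_}. Arguments gone {_}.
Arguments gpow {_}.
Local Infix "**" := gmul (at level 40, left associativity).

Section GroupTheory.
Context {G : Group}.
Implicit Types x y z g h a b n : G.

Lemma gmulVr x : x ** ginv x = gone.
Proof.
  rewrite <- (gmul1l G (x ** ginv x)), <- (gmulVl G (ginv x)) at 1.
  rewrite <- gmulA, (gmulA G (ginv x)), gmulVl, gmul1l, gmulVl. reflexivity.
Qed.

Lemma gmul1r x : x ** gone = x.
Proof. rewrite <- (gmulVl G x), gmulA, gmulVr, gmul1l. reflexivity. Qed.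

Lemma gmulK x y : x ** y ** ginv y = x.
Proof. rewrite <- gmulA, gmulVr, gmul1r. reflexivity. Qed.

Lemma gmulVK x y : x ** ginv y ** y = x.
Proof. rewrite <- gmulA, gmulVl, gmul1r. reflexivity. Qed.

Lemma gmulI x y z : x ** y = x ** z -> y = z.
Proof.
  intro E. rewrite <- (gmul1l G y), <- (gmul1l G z), <- (gmulVl G x), <- !gmulA, E.
  reflexivity.
Qed.

Lemma gmulIr x y z : y ** x = z ** x -> y = z.
Proof. intro E. rewrite <- (gmulK y x), <- (gmulK z x), E. reflexivity. Qed.

Lemma ginv_unique x y : x ** y = gone -> ginv x = y.
Proof. intro E. apply (gmulI x). rewrite gmulVr, E. reflexivity. Qed.

Lemma ginvK x : ginv (ginv x) = x.
Proof. apply ginv_unique, gmulVl. Qed.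

Lemma ginvM x y : ginv (x ** y) = ginv y ** ginv x.
Proof.
  apply ginv_unique. rewrite gmulA, <- (gmulA G x y), gmulVr, gmul1r, gmulVr.
  reflexivity.
Qed.

Lemma ginv1 : ginv (@gone G) = gone.
Proof. apply ginv_unique, gmul1l. Qed.

Lemma gpowD x i j : gpow x (i + j) = gpow x i ** gpow x j.
Proof.
  induction i as [|i IH]; simpl; [rewrite gmul1l | rewrite IH, gmulA]; reflexivity.
Qed.

Lemma gpowM x i j : gpow x (i * j) = gpow (gpow x i) j.
Proof.
  induction j as [|j IH]; simpl; [rewrite Nat.mul_0_r; reflexivity|].
  rewrite Nat.mul_succ_r, Nat.add_comm, gpowD, IH. reflexivity.
Qed.

Lemma gpowSr x i : gpow x (S i) = gpow x i ** x.
Proof.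
  rewrite <- Nat.add_1_r, gpowD. simpl. rewrite gmul1r. reflexivity.
Qed.

Lemma gpowB x i j : j <= i -> gpow x i ** ginv (gpow x j) = gpow x (i - j).
Proof.
  intro le_ji. replace i with ((i - j) + j) at 1 by lia. rewrite gpowD, gmulK.
  reflexivity.
Qed.

Definition commute x y : Prop := x ** y = y ** x.

Lemma commute_sym x y : commute x y -> commute y x.
Proof. unfold commute; auto. Qed.

Lemma commute1 x : commute x gone.
Proof. unfold commute; rewrite gmul1l, gmul1r; reflexivity. Qed.

Lemma commuteM x y z : commute x y -> commute x z -> commute x (y ** z).
Proof.
  unfold commute; intros Cy Cz. rewrite gmulA, Cy, <- gmulA, Cz, gmulA. reflexivity.
Qed.

Lemma commuteV x y : commute x y -> commute x (ginv y).
Proof.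
  unfold commute; intro C. apply (gmulI y).
  rewrite gmulA, <- C, <- gmulA, gmulVr, gmulA, gmulVr, gmul1l, gmul1r. reflexivity.
Qed.

Lemma commuteX x y i : commute x y -> commute x (gpow y i).
Proof.
  intro C. induction i; simpl; [apply commute1 | apply commuteM; auto].
Qed.

Lemma commute_gpow x i j : commute (gpow x i) (gpow x j).
Proof. unfold commute; rewrite <- !gpowD, Nat.add_comm. reflexivity. Qed.

Lemma commute_mulKl x y n : commute x n -> commute (y ** x) n -> commute y n.
Proof.
  unfold commute; intros Cx Cyx.
  rewrite <- gmulA, Cx, !gmulA in Cyx. exact (gmulIr _ _ _ Cyx).
Qed.

(** [h^i h^-j] stands for the integer power [h^(i-j)]. *)
Definition cycle h : G -> Prop :=
  fun y => exists i j, y = gpow h i ** ginv (gpow h j).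

Definition prodset (A B : G -> Prop) : G -> Prop :=
  fun y => exists a b, A a /\ B b /\ y = a ** b.

Lemma cycle_subgroup h : is_subgroup G (cycle h).
Proof.
  split; [|split].
  - exists 0, 0. simpl. rewrite gmulVr. reflexivity.
  - intros y z [i [j ->]] [k [l ->]]. exists (i + k), (j + l).
    assert (C : commute (ginv (gpow h j)) (gpow h k))
      by apply commute_sym, commuteV, commute_gpow.
    rewrite (Nat.add_comm j), !gpowD, ginvM, !gmulA.
    rewrite <- (gmulA _ (gpow h i) _ (gpow h k)), C, !gmulA. reflexivity.
  - intros y [i [j ->]]. exists j, i. rewrite ginvM, ginvK. reflexivity.
Qed.

Lemma cycle_gen h : cycle h h.
Proof. exists 1, 0. simpl. rewrite ginv1, !gmul1r. reflexivity. Qed.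

Lemma conj_normal (N : G -> Prop) a w :
  is_normal G N -> N a -> N (w ** a ** ginv w).
Proof.
  intros [_ N_conj] Na. specialize (N_conj (ginv w) a Na). rewrite ginvK in N_conj.
  exact N_conj.
Qed.

Lemma prodset_normal_subgroup (N K : G -> Prop) :
  is_normal G N -> is_subgroup G K -> is_subgroup G (prodset N K).
Proof.
  intros nN [K1 [KM KV]]. pose proof (proj1 nN) as [N1 [NM NV]].
  split; [|split].
  - exists gone, gone. rewrite gmul1l. auto.
  - intros y z [a [b [Na [Kb ->]]]] [c [d [Nc [Kd ->]]]].
    exists (a ** (b ** c ** ginv b)), (b ** d). repeat split; auto.
    + apply NM; auto. apply conj_normal; auto.
    + rewrite !gmulA, gmulVK. reflexivity.
  - intros y [a [b [Na [Kb ->]]]].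
    exists (ginv b ** ginv a ** ginv (ginv b)), (ginv b). repeat split; auto.
    + apply conj_normal; auto.
    + rewrite ginvM, gmulVK. reflexivity.
Qed.

Lemma prodset_l (A B : G -> Prop) a : is_subgroup G B -> A a -> prodset A B a.
Proof. intros [B1 _] Aa. exists a, gone. rewrite gmul1r. auto. Qed.

Lemma prodset_r (A B : G -> Prop) b : is_subgroup G A -> B b -> prodset A B b.
Proof. intros [A1 _] Bb. exists gone, b. rewrite gmul1l. auto. Qed.

Lemma centralizer_prodset (A B : G -> Prop) x :
  centralizer G A x -> centralizer G B x -> centralizer G (prodset A B) x.
Proof. intros CA CB y [a [b [Aa [Bb ->]]]]. apply commuteM; [apply CA | apply CB]; assumption. Qed.

Lemma centralizer_cycle x h : commute x h -> centralizer G (cycle h) x.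
Proof. intros C y [i [j ->]]. apply commuteM, commuteV; apply commuteX; exact C. Qed.

End GroupTheory.

Lemma pigeonhole_nat {A : Type} (l : list A) (f : nat -> A) :
  (forall k, In (f k) l) -> exists i j, i < j /\ f i = f j.
Proof.
  intro f_in. apply NNPP; intro inj_f.
  assert (nodup : forall n a, NoDup (map f (seq a n))).
  { induction n as [|n IH]; intro a; simpl; constructor; auto.
    intro f_a. apply in_map_iff in f_a as [k [fk k_in]]. apply in_seq in k_in.
    apply inj_f. exists a, k. split; [lia | auto]. }
  assert (sub_l : incl (map f (seq 0 (S (length l)))) l).
  { intros y y_in. apply in_map_iff in y_in as [k [<- _]]. auto. }
  pose proof (NoDup_incl_length (nodup _ 0) sub_l) as long.
  rewrite length_map, length_seq in long. lia.
Qed.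

Section FiniteSubgroups.
Context {G : Group} (N : G -> Prop) (fin_N : finite_set G N).

Lemma finite_subgroup_torsion y :
  is_subgroup G N -> N y -> exists k, 0 < k /\ gpow y k = gone.
Proof.
  intros [N1 [NM _]] Ny. destruct fin_N as [l N_l].
  destruct (pigeonhole_nat l (gpow y)) as [i [j [lt_ij E]]].
  { intro k. apply N_l. induction k; simpl; auto. }
  exists (j - i). split; [lia|].
  rewrite <- gpowB, E by lia. apply gmulVr.
Qed.

Lemma infinite_order_pow_notin g k :
  is_subgroup G N -> infinite_order G g -> 0 < k -> ~ N (gpow g k).
Proof.
  intros sN inf_g k_gt0 N_gk.
  destruct (finite_subgroup_torsion _ sN N_gk) as [t [t_gt0 E]].
  rewrite <- gpowM in E. apply (inf_g (k * t)); [lia | exact E].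
Qed.

Lemma infinite_order_pow_quot_in g i j :
  is_subgroup G N -> infinite_order G g ->
  N (gpow g i ** ginv (gpow g j)) -> i = j.
Proof.
  intros sN inf_g.
  assert (wlog : forall p q, q < p -> ~ N (gpow g p ** ginv (gpow g q))).
  { intros p q lt_qp. rewrite gpowB by lia.
    apply infinite_order_pow_notin; auto; lia. }
  intro N_ij. destruct (lt_eq_lt_dec i j) as [[lt_ij | ->] | lt_ji]; auto.
  - exfalso. apply (wlog j i lt_ij).
    replace (gpow g j ** ginv (gpow g i)) with (ginv (gpow g i ** ginv (gpow g j)))
      by (rewrite ginvM, ginvK; reflexivity).
    apply (proj2 (proj2 sN)), N_ij.
  - exfalso. exact (wlog i j lt_ji N_ij).
Qed.

Hypothesis nN : is_normal G N.

(** The conjugates [g^-k n g^k] all lie in the finite set [N], so two of them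
    coincide, and [g^(j-i)] commutes with [n] when [g^-i n g^i = g^-j n g^j]. *)
Lemma normal_finite_pow_commute g n :
  N n -> exists d, 0 < d /\ commute (gpow g d) n.
Proof.
  intro Nn. destruct fin_N as [l N_l].
  set (conj k := ginv (gpow g k) ** n ** gpow g k).
  assert (N_conj : forall k, N (conj k)).
  { induction k as [|k IH]; unfold conj in *.
    - simpl. rewrite ginv1, gmul1l, gmul1r. exact Nn.
    - rewrite gpowSr, ginvM.
      replace (ginv g ** ginv (gpow g k) ** n ** (gpow g k ** g))
        with (ginv g ** (ginv (gpow g k) ** n ** gpow g k) ** g)
        by (rewrite !gmulA; reflexivity).
      apply (proj2 nN), IH. }
  destruct (pigeonhole_nat l conj) as [i [j [lt_ij E]]]; [intro k; apply N_l, N_conj|].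
  exists (j - i). split; [lia|]. unfold commute. rewrite <- gpowB by lia.
  apply (f_equal (fun y => gpow g j ** y ** ginv (gpow g i))) in E.
  unfold conj in E. rewrite !gmulA, gmulVr, gmul1l, gmulK in E.
  rewrite E, !gmulA. reflexivity.
Qed.

Lemma normal_finite_pow_centralizer g :
  exists m, 0 < m /\ centralizer G N (gpow g m).
Proof.
  assert (in_l : forall l, exists m, 0 < m /\ forall n, In n l -> N n -> commute (gpow g m) n).
  { induction l as [|a l IH].
    - exists 1. split; [lia | intros n []].
    - destruct IH as [m [m_gt0 C]].
      destruct (classic (N a)) as [Na | nNa].
      + destruct (normal_finite_pow_commute g a Na) as [d [d_gt0 Cd]].
        exists (m * d). split; [nia|]. intros n [<- | n_in] Nn.
        * rewrite Nat.mul_comm, gpowM. apply commute_sym, commuteX, commute_sym, Cd.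
        * rewrite gpowM. apply commute_sym, commuteX, commute_sym, C; auto.
      + exists m. split; auto. intros n [<- | n_in] Nn; [contradiction | auto]. }
  destruct fin_N as [l N_l], (in_l l) as [m [m_gt0 C]].
  exists m. split; [exact m_gt0 | intros n Nn; apply C; auto].
Qed.

End FiniteSubgroups.

Theorem lemma2p4 (G : Group)
  (hyp : forall H : G -> Prop, is_subgroup G H -> ~ abelian G H ->
         forall g : G, centralizer G H g -> H g)
  (N : G -> Prop) (hN : is_normal G N) (hfin : finite_set G N) :
  forall g : G, infinite_order G g -> centralizer G N g.
Proof.
  intros g inf_g n Nn. apply NNPP; intro not_gn.
  destruct (normal_finite_pow_centralizer N hfin hN g) as [m [m_gt0 Cx]].
  set (x := gpow g m) in *. set (h := gpow g (S m)).
  set (H := prodset N (cycle h)).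
  assert (sH : is_subgroup G H)
    by (apply prodset_normal_subgroup; [exact hN | apply cycle_subgroup]).
  assert (nabH : ~ abelian G H).
  { intro abH. apply not_gn, (commute_mulKl x); [apply Cx, Nn|].
    apply commute_sym, abH.
    - apply prodset_l; [apply cycle_subgroup | exact Nn].
    - apply prodset_r; [apply hN | apply cycle_gen]. }
  assert (CH : centralizer G H x).
  { apply centralizer_prodset; [exact Cx|]. apply centralizer_cycle, commute_gpow. }
  destruct (hyp H sH nabH x CH) as [a [b [Na [[i [j ->]] Ex]]]].
  assert (Ea : a = gpow g (m + S m * j) ** ginv (gpow g (S m * i))).
  { unfold h in Ex. rewrite <- !gpowM in Ex.
    rewrite gpowD; fold x. rewrite Ex, !gmulA, gmulVK, gmulK. reflexivity. }
  rewrite Ea in Na.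
  apply (infinite_order_pow_quot_in N hfin _ _ _ (proj1 hN) inf_g) in Na.
  destruct (le_lt_dec i j); nia.
Qed.
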